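(* Let $L$ be a finite-dimensional Lie superalgebra over a field of characteristic different from $2,3$, and let $(T_1,\lambda_1)$ and $(T_2,\lambda_2)$ be two universal elements of $C(L)$. Then $T_1\cong T_2$.
   Context: Lie superalgebras: $\mathbb{Z}_2$-graded algebras with graded skew-symmetric bracket satisfying the graded Jacobi identity; $\mathrm{Hom}(K,L)$ denotes Lie superalgebra homomorphisms (even, bracket-preserving). $Z(K)$ is the center, $K'=[K,K]$. $C(L)$ is the class of pairs $(K,\lambda)$ with $K$ a Lie superalgebra and $\lambda\in\mathrm{Hom}(K,L)$ surjective with $\mathrm{Ker}(\lambda)\subseteq K'\cap Z(K)$. An element $(T,\sigma)\in C(L)$ is universal if for every $(K,\lambda)\in C(L)$ there exists $\tau\in\mathrm{Hom}(T,K)$ with $\lambda\circ\tau=\sigma$. *)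

From HB Require Import structures.
From mathcomp Require Import all_boot all_order all_algebra.
Set Implicit Arguments. Unset Strict Implicit. Unset Printing Implicit Defensive.
Import GRing.Theory.
Local Open Scope ring_scope.

(* The carrier is an F-vector space V; the Z_2-grading V = V_0 (+) V_1 is
   encoded by the (linear, idempotent) projection [proj0] onto the even part
   along the odd part: V_0 = {x | proj0 x = x}, V_1 = {x | proj0 x = 0}. *)

Definition homog (F : fieldType) (V : lmodType F) (p0 : V -> V) (b : bool) (x : V) : Prop :=
  if b then p0 x = 0 else p0 x = x.

Definition ssign (F : fieldType) (a b : bool) : F := (-1) ^+ (a && b).

Record lieSuper (F : fieldType) := LieSuper {
  ls_car :> lmodType F;
  proj0 : ls_car -> ls_car;
  sbr : ls_car -> ls_car -> ls_car;
  proj0_lin : forall (c : F) (x y : ls_car), proj0 (c *: x + y) = c *: proj0 x + proj0 y;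
  proj0_id : forall x, proj0 (proj0 x) = proj0 x;
  sbr_linl : forall (c : F) (x y z : ls_car), sbr (c *: x + y) z = c *: sbr x z + sbr y z;
  sbr_linr : forall (c : F) (x y z : ls_car), sbr x (c *: y + z) = c *: sbr x y + sbr x z;
  sbr_graded : forall (a b : bool) (x y : ls_car),
      homog proj0 a x -> homog proj0 b y -> homog proj0 (addb a b) (sbr x y);
  sbr_skew : forall (a b : bool) (x y : ls_car),
      homog proj0 a x -> homog proj0 b y -> sbr x y = - (ssign F a b *: sbr y x);
  sbr_jacobi : forall (a b c : bool) (x y z : ls_car),
      homog proj0 a x -> homog proj0 b y -> homog proj0 c z ->
      ssign F a c *: sbr x (sbr y z) + ssign F a b *: sbr y (sbr z x)
        + ssign F b c *: sbr z (sbr x y) = 0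
}.

Arguments proj0 {F} l _.
Arguments sbr {F} l _ _.

Section Defs.
Variable F : fieldType.

Definition findim (L : lieSuper F) : Prop :=
  exists s : seq L, forall x : L,
    exists c : 'I_(size s) -> F, x = \sum_(i < size s) c i *: nth 0 s i.

Definition is_lshom (K L : lieSuper F) (f : K -> L) : Prop :=
  (forall (c : F) (x y : K), f (c *: x + y) = c *: f x + f y) /\
  (forall x : K, f (proj0 K x) = proj0 L (f x)) /\
  (forall x y : K, f (sbr K x y) = sbr L (f x) (f y)).

Definition in_center (K : lieSuper F) (x : K) : Prop :=
  forall y : K, sbr K x y = 0.

Definition in_derived (K : lieSuper F) (x : K) : Prop :=
  exists s : seq (K * K), x = \sum_(p <- s) sbr K p.1 p.2.

Definition inC (L K : lieSuper F) (lam : K -> L) : Prop :=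
  is_lshom lam /\ (forall y : L, exists x : K, lam x = y) /\
  (forall x : K, lam x = 0 -> in_derived x /\ in_center x).

Definition universalC (L T : lieSuper F) (sigma : T -> L) : Prop :=
  inC sigma /\
  forall (K : lieSuper F) (lam : K -> L), inC lam ->
    exists tau : T -> K, is_lshom tau /\ (forall t : T, lam (tau t) = sigma t).

Definition ls_iso (K L : lieSuper F) : Prop :=
  exists f : K -> L, is_lshom f /\ bijective f.

End Defs.

From HB Require Import structures.
From mathcomp Require Import all_boot all_order all_algebra.
Set Implicit Arguments.
Unset Strict Implicit.
Import GRing.Theory.
Local Open Scope ring_scope.

(* Universality gives homomorphisms t1 : T1 -> T2 and t2 : T2 -> T1 over L.
   The endomorphism phi = t2 \o t1 of T1 satisfies lam1 \o phi = lam1, so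
   phi - id takes values in Ker lam1, which lies in T1' and in the center.
   Moving the arguments of a bracket by central elements does not change it,
   so phi fixes every bracket, hence fixes T1' pointwise; in particular
   phi (phi x - x) = phi x - x, i.e. (phi - id)^2 = 0 and 2 - phi inverts phi.
   The same holds for t1 \o t2, so t1 is bijective. *)

Section LinearFacts.
Variables (F : fieldType) (U V : lmodType F) (f : U -> V).
Hypothesis f_lin : linear f.

Let fL : {linear U -> V} := HB.pack f (GRing.isLinear.Build F U V *:%R f f_lin).

Lemma lin0 : f 0 = 0. Proof. exact: (linear0 fL). Qed.

Lemma linD x y : f (x + y) = f x + f y. Proof. exact: (linearD fL). Qed.

Lemma linB x y : f (x - y) = f x - f y. Proof. exact: (linearB fL). Qed.

Lemma linMn n x : f (x *+ n) = f x *+ n. Proof. exact: (linearMn fL). Qed.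

Lemma lin_sum (I : Type) (s : seq I) (g : I -> U) :
  f (\sum_(i <- s) g i) = \sum_(i <- s) f (g i).
Proof. exact: (linear_sum fL). Qed.

End LinearFacts.

Section GradedFacts.
Variables (F : fieldType) (K : lieSuper F).

Local Notation p0 := (proj0 K).
Local Notation br := (sbr K).

Lemma proj0_linear : linear p0. Proof. exact: proj0_lin. Qed.

Lemma sbr_linear_l z : linear (br ^~ z). Proof. by move=> c x y; apply: sbr_linl. Qed.

Lemma sbr_linear_r x : linear (br x). Proof. by move=> c y z; apply: sbr_linr. Qed.

Lemma homog_even x : homog p0 false (p0 x).
Proof. exact: proj0_id. Qed.

Lemma homog_odd x : homog p0 true (x - p0 x).
Proof. by rewrite /homog (linB proj0_linear) proj0_id subrr. Qed.

Lemma homog_split x : x = p0 x + (x - p0 x).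
Proof. by rewrite subrKC. Qed.

Lemma homog_add_eq0 b u v :
  homog p0 b u -> homog p0 (~~ b) v -> u + v = 0 -> u = 0 /\ v = 0.
Proof.
move=> hu hv uv0; have := congr1 p0 uv0.
rewrite (linD proj0_linear) (lin0 proj0_linear).
case: b hu hv => /= -> ->; rewrite ?add0r ?addr0 => w0.
- by move: uv0; rewrite w0 addr0.
- by move: uv0; rewrite w0 add0r.
Qed.

Lemma in_center_homog_parts d :
  in_center d -> in_center (p0 d) /\ in_center (d - p0 d).
Proof.
move=> cd.
have homog_case b y : homog p0 b y -> br (p0 d) y = 0 /\ br (d - p0 d) y = 0.
  move=> hy; apply: (homog_add_eq0 (sbr_graded (homog_even d) hy)).
    exact: (sbr_graded (homog_odd d) hy).
  by rewrite -(linD (sbr_linear_l y)) -homog_split cd.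
split=> y; rewrite (homog_split y) (linD (sbr_linear_r _)).
- by rewrite (homog_case _ _ (homog_even y)).1 (homog_case _ _ (homog_odd y)).1 addr0.
- by rewrite (homog_case _ _ (homog_even y)).2 (homog_case _ _ (homog_odd y)).2 addr0.
Qed.

(* The center is defined by [d, y] = 0; vanishing of [x, d] needs skew-symmetry,
   which only holds for homogeneous elements. *)
Lemma sbr_center_r x d : in_center d -> br x d = 0.
Proof.
move=> cd; have [cd0 cd1] := in_center_homog_parts cd.
have homog_case b d' : homog p0 b d' -> in_center d' -> br x d' = 0.
  move=> hd cd'.
  have skew0 a x' : homog p0 a x' -> br x' d' = 0.
    by move=> hx; rewrite (sbr_skew hx hd) cd' scaler0 oppr0.
  rewrite (homog_split x) (linD (sbr_linear_l _) (p0 x)).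
  by rewrite (skew0 _ _ (homog_even x)) (skew0 _ _ (homog_odd x)) addr0.
rewrite (homog_split d) (linD (sbr_linear_r x)).
by rewrite (homog_case _ _ (homog_even d) cd0) (homog_case _ _ (homog_odd d) cd1) addr0.
Qed.

Lemma lshom_fixes_derived (phi : K -> K) :
  is_lshom phi -> (forall x, in_center (phi x - x)) ->
  forall y, in_derived y -> phi y = y.
Proof.
move=> [phi_lin [_ phi_br]] shift_central _ [s ->].
rewrite (lin_sum phi_lin); apply: eq_bigr => -[a b] _ /=.
rewrite phi_br -[phi a](subrK a) -[phi b](subrK b).
rewrite (linD (sbr_linear_l _)) shift_central add0r (linD (sbr_linear_r _)).
by rewrite (sbr_center_r _ (shift_central b)) add0r.
Qed.

Lemma lshom_unipotent (phi : K -> K) :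
  is_lshom phi -> (forall x, in_derived (phi x - x) /\ in_center (phi x - x)) ->
  forall x, phi (phi x) = phi x *+ 2 - x.
Proof.
move=> hphi shift_ker x.
have := lshom_fixes_derived hphi (fun y => (shift_ker y).2) (shift_ker x).1.
by rewrite (linB hphi.1) mulr2n addrAC => <-; rewrite subrK.
Qed.

End GradedFacts.

Lemma lshom_comp (F : fieldType) (A B C : lieSuper F) (f : A -> B) (g : B -> C) :
  is_lshom f -> is_lshom g -> is_lshom (g \o f).
Proof.
move=> [f_lin [f_p0 f_br]] [g_lin [g_p0 g_br]]; split; last split.
- by move=> c x y /=; rewrite f_lin g_lin.
- by move=> x /=; rewrite f_p0 g_p0.
- by move=> x y /=; rewrite f_br g_br.
Qed.

Lemma inC_lshom_over_unipotent (F : fieldType) (L T : lieSuper F)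
    (sigma : T -> L) (phi : T -> T) :
  inC sigma -> is_lshom phi -> (forall x, sigma (phi x) = sigma x) ->
  forall x, phi (phi x) = phi x *+ 2 - x.
Proof.
move=> [[sigma_lin _] [_ ker_sigma]] hphi over.
by apply: lshom_unipotent => // x; apply: ker_sigma; rewrite (linB sigma_lin) over subrr.
Qed.

Lemma linear_bijective_of_unipotent_comps (F : fieldType) (U V : lmodType F)
    (f : U -> V) (g : V -> U) :
  linear f ->
  (forall x, g (f (g (f x))) = g (f x) *+ 2 - x) ->
  (forall y, f (g (f (g y))) = f (g y) *+ 2 - y) ->
  bijective f.
Proof.
move=> f_lin gf_unip fg_unip.
exists (fun y => g y *+ 2 - g (f (g y))) => [x | y].
- by rewrite gf_unip subKr.
- by rewrite (linB f_lin) (linMn f_lin) fg_unip subKr.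
Qed.

Unset Implicit Arguments.

Theorem theorem4p6 (F : fieldType) (char2 : (2%:R : F) != 0) (char3 : (3%:R : F) != 0)
  (L : lieSuper F) (fdL : findim L)
  (T1 : lieSuper F) (lam1 : T1 -> L) (T2 : lieSuper F) (lam2 : T2 -> L) :
  universalC lam1 -> universalC lam2 -> ls_iso T1 T2.
Proof.
move=> [C1 U1] [C2 U2].
have [t1 [t1_hom over1]] := U1 _ _ C2.
have [t2 [t2_hom over2]] := U2 _ _ C1.
exists t1; split=> //.
apply: (linear_bijective_of_unipotent_comps (g := t2) t1_hom.1).
- exact: (inC_lshom_over_unipotent C1 (lshom_comp t1_hom t2_hom))
    (fun x => etrans (over2 _) (over1 x)).
- exact: (inC_lshom_over_unipotent C2 (lshom_comp t2_hom t1_hom))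
    (fun y => etrans (over1 _) (over2 y)).
Qed.
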